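(* Let $G=(V,E)$ be a finite graph with positive edge weight function $m$. Suppose there is a constant $0\le\beta<1$ such that for every $v\in V$, $m(v)\ge\left(\max_{e'\in E}m(e')\right)(1-\beta)|V|$. Then $h_G\ge1-2\beta$, i.e., $G$ is a $2\beta$-expander.
   Context: For a finite graph $G=(V,E)$ with positive edge weights $m:E\to\mathbb{R}_{>0}$, set $m(v)=\sum_{e\in E,\ v\in e}m(e)$, $m(U)=\sum_{v\in U}m(v)$, and $m(U_1,U_2)=\sum_{(u_1,u_2)\in U_1\times U_2,\ \{u_1,u_2\}\in E}m(\{u_1,u_2\})$. The (generalized) Cheeger constant is $h_G=\min_{\emptyset\neq U\subsetneq V}\frac{m(U,V\setminus U)\,m(V)}{m(U)\,m(V\setminus U)}$. $G$ is a $\lambda$-expander if $1-h_G\le\lambda$. *)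

From mathcomp Require Import all_boot all_order all_algebra.
Set Implicit Arguments. Unset Strict Implicit. Unset Printing Implicit Defensive.
Import Order.TTheory GRing.Theory Num.Theory.
Local Open Scope ring_scope.

(* A finite (simple) graph on the finite vertex type V: its edge set E is a set
   of 2-element subsets of V; m : {set V} -> R is the edge weight (only its
   values on E matter). *)
Section Graph.
Variables (R : realFieldType) (V : finType) (E : {set {set V}}) (m : {set V} -> R).

Definition is_simple_graph : Prop := forall e, e \in E -> #|e| = 2%N.
Definition pos_weights : Prop := forall e, e \in E -> 0 < m e.

Definition vweight (v : V) : R := \sum_(e in E | v \in e) m e.
Definition sweight (U : {set V}) : R := \sum_(v in U) vweight v.
Definition cutweight (U1 U2 : {set V}) : R :=
  \sum_(u1 in U1) \sum_(u2 in U2 | [set u1; u2] \in E) m [set u1; u2].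

Definition cheeger_ratio (U : {set V}) : R :=
  cutweight U (~: U) * sweight setT / (sweight U * sweight (~: U)).

Definition proper_nonempty (U : {set V}) : bool := (U != set0) && (U != setT).

(* h_G = min over nonempty proper subsets U of the ratio (0 if there is no
   such U, a case excluded by the hypotheses of the theorem). *)
Definition cheeger : R :=
  match [pick U | proper_nonempty U] with
  | Some U0 => \big[Num.min/cheeger_ratio U0]_(U | proper_nonempty U) cheeger_ratio U
  | None => 0
  end.

Definition expander (lambda : R) : Prop := 1 - cheeger <= lambda.

(* max_{e in E} m(e) (E nonempty and weights positive in the theorem) *)
Definition max_edge_weight : R := \big[Num.max/0]_(e in E) m e.

End Graph.

From mathcomp Require Import all_boot all_order all_algebra.
From mathcomp Require Import ring lra.
Set Implicit Arguments. Unset Strict Implicit. Unset Printing Implicit Defensive.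
Import Order.TTheory GRing.Theory Num.Theory.
Local Open Scope ring_scope.

(* With M the maximal edge weight, n = |V| and U of size k, the edges inside U
   carry weight at most k^2 M, so m(U,~U) >= m(U) - k^2 M, while m(U) >= (1-b) M n k.
   Hence m(U,~U)/m(U) >= 1 - k/((1-b)n), and since the Cheeger ratio is
   m(U,~U)/m(U) + m(U,~U)/m(~U), it is at least 2 - 1/(1-b) >= 1 - 2b. *)

Lemma ge_one_sub_twice (R : realFieldType) (beta x : R) :
  0 <= beta -> beta < 1 -> 0 <= x -> 2 - (1 - beta)^-1 <= x -> 1 - 2 * beta <= x.
Proof.
move=> b_ge0 b_lt1 x_ge0; have [b_le_half|b_gt_half] := lerP beta 2^-1; last by lra.
suff: 1 - 2 * beta <= 2 - (1 - beta)^-1 by lra.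
have t_def : (1 - beta)^-1 * (1 - beta) = 1 by rewrite mulVf // subr_eq0 gt_eqF.
have : 0 < (1 - beta)^-1 by rewrite invr_gt0 subr_gt0.
nra.
Qed.

Section Graph.
Variables (R : realFieldType) (V : finType) (E : {set {set V}}) (m : {set V} -> R).
Hypotheses (E_simple : is_simple_graph E) (m_pos : pos_weights E m).

Local Notation M := (max_edge_weight E m).

Definition adjw (u w : V) : R := if [set u; w] \in E then m [set u; w] else 0.

Lemma simple_edgeE e u w : e \in E -> u \in e -> w \in e -> w != u -> e = [set u; w].
Proof.
move=> eE ue we wu; apply/eqP; rewrite eq_sym eqEcard.
apply/andP; split; first by apply/subsetP => z; rewrite !inE => /orP[]/eqP->.
by rewrite (E_simple eE) cards2 eq_sym wu.
Qed.

Lemma vweightE u : vweight E m u = \sum_(w | w != u) adjw u w.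
Proof.
rewrite /vweight.
transitivity (\sum_(e in E | u \in e) \sum_(w | (w != u) && (w \in e)) m e).
  apply: eq_bigr => e /andP[eE ue].
  have /cards1P[w ew] : #|e :\ u| == 1%N.
    by move: (cardsD1 u e); rewrite ue (E_simple eE) add1n => -[<-].
  rewrite (eq_bigl (pred1 w)) ?big_pred1_eq // => z.
  by rewrite /= -(in_set1 z w) -ew in_setD1.
rewrite (exchange_big_dep (fun w => w != u)); last by move=> e w _ /andP[].
apply: eq_bigr => w wu; rewrite /adjw; case: ifP => uwE.
  rewrite (eq_bigl (pred1 [set u; w])) ?big_pred1_eq // => e /=.
  apply/idP/eqP => [/andP[/andP[eE ue] /andP[_ we]]|->].
    exact: simple_edgeE.
  by rewrite uwE wu !inE !eqxx orbT.
rewrite big_pred0 // => e /=; apply/negP => /andP[/andP[eE ue] /andP[_ we]].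
by move: uwE; rewrite -(simple_edgeE eE ue we wu) eE.
Qed.

Lemma le_max_edge_weight e : e \in E -> m e <= M.
Proof. by move=> eE; rewrite /max_edge_weight (bigD1 e) //= le_max lexx. Qed.

Lemma max_edge_weight_gt0 : E != set0 -> 0 < M.
Proof. by case/set0Pn => e eE; exact: lt_le_trans (m_pos eE) (le_max_edge_weight eE). Qed.

Lemma adjw_ge0 u w : 0 <= adjw u w.
Proof. by rewrite /adjw; case: ifP => // uwE; exact: ltW (m_pos uwE). Qed.

Lemma adjw_le_max u w : E != set0 -> adjw u w <= M.
Proof.
move=> E_n0; rewrite /adjw; case: ifP => [|_]; first exact: le_max_edge_weight.
exact: ltW (max_edge_weight_gt0 E_n0).
Qed.

Lemma cutweight_ge0 U1 U2 : 0 <= cutweight E m U1 U2.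
Proof. by apply: sumr_ge0 => u _; apply: sumr_ge0 => w /andP[_ uwE]; exact: ltW (m_pos uwE). Qed.

Lemma cutweightC U1 U2 : cutweight E m U1 U2 = cutweight E m U2 U1.
Proof.
rewrite /cutweight; under eq_bigr do rewrite big_mkcondr.
rewrite exchange_big; apply: eq_bigr => w _; rewrite big_mkcondr.
by apply: eq_bigr => u _; rewrite setUC.
Qed.

Lemma sweightT U : sweight E m setT = sweight E m U + sweight E m (~: U).
Proof. by rewrite /sweight (big_setID U) setTI setTD. Qed.

Lemma sweight_le_cut U :
  E != set0 -> sweight E m U <= cutweight E m U (~: U) + #|U|%:R ^+ 2 * M.
Proof.
move=> E_n0; have -> : #|U|%:R ^+ 2 * M = \sum_(u in U) (#|U|%:R * M).
  by rewrite sumr_const -mulr_natr; ring.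
rewrite /sweight /cutweight -big_split /=; apply: ler_sum => u _; rewrite vweightE.
apply: (@le_trans _ _ (\sum_w adjw u w)).
  by rewrite [X in _ <= X](bigID (fun w => w != u)) /= lerDl sumr_ge0 // => w _; exact: adjw_ge0.
rewrite (bigID (fun w => w \in U)) /= addrC lerD //.
  rewrite big_mkcondr /= (eq_bigl (fun w => w \in ~: U)) => [|w]; last by rewrite in_setC.
  by apply: ler_sum => w _; rewrite /adjw.
rewrite mulr_natl -sumr_const; apply: ler_sum => w _; exact: adjw_le_max.
Qed.

Lemma cheeger_ratio_split U : sweight E m U != 0 -> sweight E m (~: U) != 0 ->
  cheeger_ratio E m U =
    cutweight E m U (~: U) / sweight E m U + cutweight E m U (~: U) / sweight E m (~: U).
Proof. by move=> a_n0 b_n0; rewrite /cheeger_ratio (sweightT U); field; rewrite a_n0 b_n0. Qed.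

Lemma cheeger_ge (x : R) : (exists U : {set V}, proper_nonempty U) ->
  (forall U, proper_nonempty U -> x <= cheeger_ratio E m U) -> x <= cheeger E m.
Proof.
move=> [U0 U0_proper] x_le; rewrite /cheeger; case: pickP => [U1 U1_proper | /(_ U0)].
  apply: (big_ind (fun y => x <= y)); [exact: x_le | | exact: x_le].
  by move=> y z xy xz; rewrite le_min xy xz.
by rewrite U0_proper.
Qed.

Lemma simple_proper_nonempty : E != set0 -> exists U : {set V}, proper_nonempty U.
Proof.
case/set0Pn => e /E_simple/eqP/cards2P[x [y [xy _]]]; exists [set x].
rewrite /proper_nonempty; apply/andP; split; apply/eqP => /setP/(_ _) x_eq.
  by move: (x_eq x); rewrite !inE eqxx.
by move: (x_eq y); rewrite !inE eq_sym (negPf xy).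
Qed.

Section MinimumDegree.
Variable beta : R.
Hypotheses (E_n0 : E != set0) (beta_lt1 : beta < 1).
Hypothesis vweight_ge : forall v, M * (1 - beta) * #|V|%:R <= vweight E m v.

Local Notation s := ((1 - beta) * #|V|%:R).

Lemma sweight_ge (U : {set V}) : M * s * #|U|%:R <= sweight E m U.
Proof.
by rewrite mulrA mulr_natr -sumr_const; apply: ler_sum => v _; exact: vweight_ge.
Qed.

Lemma card_vertices_gt0 : (0 < #|V|)%N.
Proof.
case/set0Pn: E_n0 => e /E_simple e2.
by rewrite (leq_trans _ (max_card (mem e))) // e2.
Qed.

Lemma scale_gt0 : 0 < s.
Proof. by rewrite mulr_gt0 ?subr_gt0 // ltr0n card_vertices_gt0. Qed.

Lemma sweight_gt0 (U : {set V}) : U != set0 -> 0 < sweight E m U.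
Proof.
move=> U_n0; apply: lt_le_trans (sweight_ge U).
rewrite mulr_gt0 ?ltr0n ?card_gt0 // mulr_gt0 ?scale_gt0 //.
exact: max_edge_weight_gt0.
Qed.

Lemma cut_ratio_ge (U : {set V}) : U != set0 ->
  1 - #|U|%:R / s <= cutweight E m U (~: U) / sweight E m U.
Proof.
move=> U_n0; set c := cutweight _ _ _ _; set a := sweight _ _ _; set k := #|U|%:R.
have k_gt0 : 0 < k by rewrite ltr0n card_gt0.
have c_ge : a - k ^+ 2 * M <= c by rewrite lerBlDr; exact: sweight_le_cut.
rewrite ler_pdivlMr ?sweight_gt0 // mulrBl mul1r (le_trans _ c_ge) // lerD2l lerN2.
rewrite [X in _ <= X]mulrAC ler_pdivlMr ?scale_gt0 // expr2 -!mulrA ler_pM2l //.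
by rewrite mulrC sweight_ge.
Qed.

Lemma cheeger_ratio_ge (U : {set V}) : 0 <= beta -> proper_nonempty U ->
  1 - 2 * beta <= cheeger_ratio E m U.
Proof.
move=> beta_ge0 /andP[U_n0 U_nT].
have UC_n0 : ~: U != set0 by apply: contra U_nT => /eqP UC0; rewrite -(setCK U) UC0 setC0.
rewrite cheeger_ratio_split ?gt_eqF ?sweight_gt0 //.
apply: ge_one_sub_twice => //.
  by rewrite addr_ge0 // divr_ge0 ?cutweight_ge0 // ltW ?sweight_gt0.
have := cut_ratio_ge U_n0; have := cut_ratio_ge UC_n0.
rewrite setCK cutweightC.
have -> : (1 - beta)^-1 = #|U|%:R / s + #|~: U|%:R / s.
  rewrite -mulrDl -natrD cardsC invfM.
  by rewrite mulrCA divff ?mulr1 // pnatr_eq0 -lt0n card_vertices_gt0.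
lra.
Qed.

End MinimumDegree.
End Graph.

Theorem lemma4p5 (R : realFieldType) (V : finType) (E : {set {set V}})
    (m : {set V} -> R) (beta : R) :
  is_simple_graph E -> E != set0 -> pos_weights E m ->
  0 <= beta -> beta < 1 ->
  (forall v : V, vweight E m v >= max_edge_weight E m * (1 - beta) * #|V|%:R) ->
  cheeger E m >= 1 - 2 * beta /\ expander E m (2 * beta).
Proof.
move=> E_simple E_n0 m_pos beta_ge0 beta_lt1 vweight_ge.
have cheeger_ge_bound : 1 - 2 * beta <= cheeger E m.
  apply: cheeger_ge; first exact: simple_proper_nonempty E_simple E_n0.
  move=> U; exact: (cheeger_ratio_ge E_simple m_pos E_n0 beta_lt1 vweight_ge beta_ge0).
by split; rewrite // /expander; lra.
Qed.
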